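(* Let $D\ge1$ and let $\hat{\vec{\mathcal{D}}}_\Theta\in\mathbb{C}^D$, $\Theta=1,\dots,n_q$, be vectors not all zero. For each $\Theta$ let $\hat{\t{e}}_\Theta\in\mathbb{C}^{D\times D}$ be symmetric ($\hat e_{\Theta,ij}=\hat e_{\Theta,ji}$). Define $$\hat{\vec{\mathcal{D}}}^{-1}_\Theta=\frac{\hat{\vec{\mathcal{D}}}^*_\Theta}{\sum_\Lambda\hat{\vec{\mathcal{D}}}_\Lambda\cdot\hat{\vec{\mathcal{D}}}^*_\Lambda},\qquad \hat{\t{g}}_{\Theta\Lambda}=\hat{\vec{\mathcal{D}}}_\Theta\otimes\hat{\vec{\mathcal{D}}}^{-1}_\Lambda,$$ and for $\hat{\vec u}\in\mathbb{C}^D$ the residual $\mathcal{R}(\hat{\vec u})=\sum_\Theta \sum_{i,j}\left|R_{\Theta,ij}\right|^2$ with $\t{R}_\Theta=\frac12\left(\hat{\vec{\mathcal{D}}}_\Theta\otimes\hat{\vec u}+\hat{\vec u}\otimes\hat{\vec{\mathcal{D}}}_\Theta\right)-\hat{\t{e}}_\Theta$. Then $\t{1}+\sum_\Theta\hat{\t{g}}_{\Theta\Theta}$ is invertible; set $\hat{\t{h}}=\left(\t{1}+\sum_\Theta\hat{\t{g}}_{\Theta\Theta}\right)^{-1}$. The residual $\mathcal{R}$ has a unique minimizer $\hat{\vec u}$, characterized by $$\left(\t{1}+\sum_\Theta\hat{\t{g}}_{\Theta\Theta}\right)\cdot\hat{\vec u}=\sum_\Theta\left(\hat{\vec{\mathcal{D}}}^{-1}_\Theta\cdot\hat{\t{e}}_\Theta+\hat{\t{e}}_\Theta\cdot\hat{\vec{\mathcal{D}}}^{-1}_\Theta\right),$$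 i.e. $\hat u_i=\sum_\Theta\sum_{l,m}\left(\hat{\mathcal{D}}^{-1}_{\Theta,l}\hat h_{im}+\hat h_{il}\hat{\mathcal{D}}^{-1}_{\Theta,m}\right)\hat e_{\Theta,lm}$. Furthermore the symmetrized gradients of this minimizer, $\hat e'_{\Theta,ij}=\frac12\left(\hat{\mathcal{D}}_{\Theta,i}\hat u_j+\hat u_i\hat{\mathcal{D}}_{\Theta,j}\right)$, are given by $\hat e'_{\Theta,ij}=\sum_\Lambda\sum_{l,m}\hat G_{\Theta\Lambda,ijlm}\hat e_{\Lambda,lm}$ with $$\hat G_{\Theta\Lambda,ijlm}=\frac12\left(\hat g_{\Theta\Lambda,il}\hat h_{jm}+\hat g_{\Theta\Lambda,im}\hat h_{jl}+\hat g_{\Theta\Lambda,jl}\hat h_{im}+\hat g_{\Theta\Lambda,jm}\hat h_{il}\right).$$ Finally, in the single-element case $n_q=1$ one has $\hat{\t{h}}=\t{1}-\frac12\hat{\t{g}}_{11}$.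
   Context: Small-strain compatibility projection at a fixed nonzero wavevector: $\hat{\vec{\mathcal{D}}}_\Theta$ is the Fourier symbol of the (possibly discrete) gradient operator evaluated in element (evaluation point) $\Theta$ of a voxel, $\hat{\t{e}}_\Theta$ the Fourier coefficient of the strain tensor in element $\Theta$, and $\hat{\vec u}$ the Fourier coefficient of the displacement. $\otimes$ is the outer product, $\vec a\cdot\t{B}$ and $\t{B}\cdot\vec a$ denote vector–matrix contractions, $\t{1}$ the identity matrix, and the star complex conjugation. *)

(* The complex field is modelled by an arbitrary
   numClosedFieldType C (e.g. algC, or complex R for R : rcfType),
   with conjugation x^* and modulus `|x|. *)
From HB Require Import structures.
From mathcomp Require Import all_boot all_order all_algebra.
Set Implicit Arguments. Unset Strict Implicit. Unset Printing Implicit Defensive.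
Import Order.TTheory GRing.Theory Num.Theory.
Local Open Scope ring_scope.

Section Defs.
Variables (C : numClosedFieldType) (nq d : nat).
(* Dv T = Fourier symbol \hat{\mathcal D}_T of the gradient in element T *)
Variable Dv : 'I_nq -> 'I_d -> C.

Definition Dnorm2 : C := \sum_(L < nq) \sum_(i < d) Dv L i * (Dv L i)^*.

Definition Dinv (T : 'I_nq) (i : 'I_d) : C := (Dv T i)^* / Dnorm2.

Definition gmx (T L : 'I_nq) : 'M[C]_d := \matrix_(i, j) (Dv T i * Dinv L j).

Definition Mmx : 'M[C]_d := 1%:M + \sum_(T < nq) gmx T T.

Definition hmx : 'M[C]_d := invmx Mmx.

Variable e : 'I_nq -> 'M[C]_d.

Definition Rmx (u : 'cV[C]_d) (T : 'I_nq) : 'M[C]_d :=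
  \matrix_(i, j) ((Dv T i * u j ord0 + u i ord0 * Dv T j) / 2%:R - e T i j).

Definition resid (u : 'cV[C]_d) : C :=
  \sum_(T < nq) \sum_(i < d) \sum_(j < d) `|Rmx u T i j| ^+ 2.

Definition is_minimizer (u : 'cV[C]_d) : Prop := forall v, resid u <= resid v.

Definition rhs : 'cV[C]_d :=
  \col_(i < d) \sum_(T < nq) \sum_(l < d)
     (Dinv T l * e T l i + e T i l * Dinv T l).

Definition Gcoef (T L : 'I_nq) (i j l m : 'I_d) : C :=
  (gmx T L i l * hmx j m + gmx T L i m * hmx j l
   + gmx T L j l * hmx i m + gmx T L j m * hmx i l) / 2%:R.
End Defs.

From HB Require Import structures.
From mathcomp Require Import all_boot all_order all_algebra.
From mathcomp Require Import ring.
Import Order.TTheory GRing.Theory Num.Theory.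
Local Open Scope ring_scope.

(* Write  S(w)_T = (D_T (x) w + w (x) D_T)/2  for the symmetrized
   gradient of a displacement w, so that  R_T(u) = S(u)_T - e_T,  and let
   E(w) = sum_T |S(w)_T|^2  be its energy.  The map w |-> S(w) is injective as
   soon as some D_T is nonzero (a discrete Korn inequality), hence E(w) = 0
   forces w = 0.  The central computation is the inner-product identity
       <R(u), S(w)> = |D|^2/2 * w^* . (M u - rhs),     M = 1 + sum_T g_TT,
   valid for symmetric e.  With e = 0 it gives  E(w) = |D|^2/2 * w^* . M w,
   so  M w = 0  implies  E(w) = 0, i.e. w = 0: M is invertible.  For a
   solution u of  M u = rhs  the cross term vanishes and the residual splits
   as  R(u + w) = R(u) + E(w),  so u is the unique minimizer.  The explicit
   formulas for u = h rhs and its symmetrized gradient are bookkeeping with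
   finite sums, and for one element g_11 is idempotent, whence
   (1 + g_11)^-1 = 1 - g_11/2. *)

Lemma psum_eq0 {R : numDomainType} {I : finType} {F : I -> R} :
  (forall i, 0 <= F i) -> \sum_i F i = 0 -> forall i, F i = 0.
Proof. by move=> F_ge0 /psumr_eq0P sum0 i; apply: sum0. Qed.

Lemma invmx_1_plus_idempotent (F : numFieldType) (n : nat) (P : 'M[F]_n) :
  P *m P = P -> invmx (1%:M + P) = 1%:M - 2%:R^-1 *: P.
Proof.
move=> PP.
have inv_right : (1%:M + P) *m (1%:M - 2%:R^-1 *: P) = 1%:M.
  rewrite mulmxDl mul1mx mulmxBr mulmx1 -scalemxAr PP.
  by apply/matrixP => i j; rewrite !mxE; move: ((i == j)%:R) => b; field.
have [unit_1P _] := mulmx1_unit inv_right.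
by rewrite -[RHS](mulKmx unit_1P) inv_right mulmx1.
Qed.

Lemma normCD (C : numClosedFieldType) (x y : C) :
  `|x + y| ^+ 2 = (`|x| ^+ 2 + `|y| ^+ 2) + (x * y^* + (x * y^* )^* ).
Proof.
have conjD : (x + y)^* = x^* + y^* by exact: rmorphD.
have conjM : (x * y^* )^* = x^* * y by rewrite -[in RHS](conjCK y); exact: rmorphM.
by rewrite !normCK conjD conjM; ring.
Qed.

Section Compatibility.
Context {C : numClosedFieldType} {nq d : nat} (Dv : 'I_nq -> 'I_d -> C).

Local Notation n := (Dnorm2 Dv).

Definition symgrad (w : 'cV[C]_d) (T : 'I_nq) : 'M[C]_d :=
  \matrix_(i, j) ((Dv T i * w j ord0 + w i ord0 * Dv T j) / 2%:R).

(* The energy E(w) = sum_T |S(w)_T|^2; it is the residual for e = 0. *)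
Definition energy (w : 'cV[C]_d) : C :=
  \sum_(T < nq) \sum_(i < d) \sum_(j < d) `|symgrad w T i j| ^+ 2.

Lemma energy_ge0 (w : 'cV[C]_d) : 0 <= energy w.
Proof. by do 3 (apply: sumr_ge0 => ? _); rewrite exprn_ge0. Qed.

Lemma symgrad_sym (w : 'cV[C]_d) T i j : symgrad w T i j = symgrad w T j i.
Proof. by rewrite !mxE addrC [Dv T i * _]mulrC [_ * Dv T j]mulrC. Qed.

Lemma Dnorm2_neq0 : (exists T i, Dv T i != 0) -> n != 0.
Proof.
case=> T [k Dk]; apply/eqP => n0.
have term_ge0 T' i : 0 <= Dv T' i * (Dv T' i)^* by exact: mul_conjC_ge0.
have row0 := psum_eq0 (fun T' => sumr_ge0 _ (fun i _ => term_ge0 T' i)) n0 T.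
have /eqP := psum_eq0 (term_ge0 T) row0 k.
by rewrite mul_conjC_eq0 (negbTE Dk).
Qed.

Lemma symgrad_inj (w : 'cV[C]_d) :
  (exists T i, Dv T i != 0) -> (forall T i j, symgrad w T i j = 0) -> w = 0.
Proof.
case=> T [k Dk] S0.
have sum0 i j : Dv T i * w j ord0 + w i ord0 * Dv T j = 0.
  by move/eqP: (S0 T i j); rewrite mxE mulf_eq0 invr_eq0 pnatr_eq0 orbF => /eqP.
have wk : w k ord0 = 0.
  move/eqP: (sum0 k k); rewrite [w k ord0 * _]mulrC -mulr2n -mulr_natr.
  by rewrite !mulf_eq0 pnatr_eq0 (negbTE Dk) orbF => /eqP.
apply/matrixP => j c; rewrite (ord1 c) mxE.
by move/eqP: (sum0 k j); rewrite wk mul0r addr0 mulf_eq0 (negbTE Dk) => /eqP.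
Qed.

Lemma energy_eq0 (w : 'cV[C]_d) :
  (exists T i, Dv T i != 0) -> energy w = 0 -> w = 0.
Proof.
move=> nzD E0; apply: symgrad_inj => // T i j.
have sq_ge0 T' i' j' : 0 <= `|symgrad w T' i' j'| ^+ 2 by rewrite exprn_ge0.
have row_ge0 T' i' : 0 <= \sum_(j' < d) `|symgrad w T' i' j'| ^+ 2.
  exact: sumr_ge0.
have E_T := psum_eq0 (fun T' => sumr_ge0 _ (fun i' _ => row_ge0 T' i')) E0 T.
have /eqP := psum_eq0 (sq_ge0 T i) (psum_eq0 (row_ge0 T) E_T i) j.
by rewrite sqrf_eq0 normr_eq0 => /eqP.
Qed.

Lemma symmetric_contract_symgrad (T : 'I_nq) (B : 'M[C]_d) (w : 'cV[C]_d) :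
  (forall i j, B i j = B j i) ->
  \sum_(i < d) \sum_(j < d) B i j * (symgrad w T i j)^*
  = \sum_(j < d) (w j ord0)^* * \sum_(i < d) B j i * (Dv T i)^*.
Proof.
move=> B_sym.
have -> : \sum_(i < d) \sum_(j < d) B i j * (symgrad w T i j)^*
  = \sum_(i < d) \sum_(j < d) (B i j * (Dv T i)^* * (w j ord0)^* / 2%:R
      + B i j * (w i ord0)^* * (Dv T j)^* / 2%:R).
  apply: eq_bigr => i _; apply: eq_bigr => j _.
  by rewrite mxE rmorphM fmorphV rmorph_nat rmorphD !rmorphM; ring.
rewrite (eq_bigr _ (fun i _ => big_split _ _ _ _ _)) big_split /= exchange_big /=.
rewrite -big_split /=; apply: eq_bigr => j _.
rewrite mulr_sumr -big_split /=; apply: eq_bigr => i _.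
by rewrite (B_sym i j); field.
Qed.

Lemma Mmx_mulE (u : 'cV[C]_d) j :
  (Mmx Dv *m u) j ord0
  = u j ord0 + \sum_(T < nq) \sum_(k < d) Dv T j * Dinv Dv T k * u k ord0.
Proof.
rewrite /Mmx mulmxDl mul1mx mulmx_suml mxE summxE; congr (_ + _).
by apply: eq_bigr => T _; rewrite mxE; apply: eq_bigr => k _; rewrite mxE.
Qed.

Section Residual.
Variable e : 'I_nq -> 'M[C]_d.
Hypothesis e_sym : forall T i j, e T i j = e T j i.

Lemma RmxE (u : 'cV[C]_d) T i j : Rmx Dv e u T i j = symgrad u T i j - e T i j.
Proof. by rewrite !mxE. Qed.

Lemma Rmx_sym (u : 'cV[C]_d) T i j : Rmx Dv e u T i j = Rmx Dv e u T j i.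
Proof. by rewrite !RmxE symgrad_sym e_sym. Qed.

Lemma Rmx_add (u w : 'cV[C]_d) T i j :
  Rmx Dv e (u + w) T i j = Rmx Dv e u T i j + symgrad w T i j.
Proof. by rewrite !RmxE !mxE; ring. Qed.

(* Contraction of the residual with D_T^*: the normal equations M u = rhs. *)
Lemma residual_contract_D (u : 'cV[C]_d) j : n != 0 ->
  \sum_(T < nq) \sum_(i < d) Rmx Dv e u T j i * (Dv T i)^*
  = n / 2%:R * ((Mmx Dv *m u) j ord0 - rhs Dv e j ord0).
Proof.
move=> n_nz; rewrite Mmx_mulE /rhs mxE mulrBr mulrDr.
have u_part : n / 2%:R * u j ord0
    = \sum_(T < nq) \sum_(i < d) Dv T i * (Dv T i)^* * u j ord0 / 2%:R.
  rewrite {1}/Dnorm2 !mulr_suml; apply: eq_bigr => T _; rewrite !mulr_suml.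
  by apply: eq_bigr => i _; ring.
have g_part : n / 2%:R * (\sum_(T < nq) \sum_(k < d) Dv T j * Dinv Dv T k * u k ord0)
    = \sum_(T < nq) \sum_(k < d) Dv T j * (Dv T k)^* * u k ord0 / 2%:R.
  rewrite mulr_sumr; apply: eq_bigr => T _; rewrite mulr_sumr.
  by apply: eq_bigr => k _; rewrite /Dinv; field.
have e_part : n / 2%:R * (\sum_(T < nq) \sum_(l < d)
        (Dinv Dv T l * e T l j + e T j l * Dinv Dv T l))
    = \sum_(T < nq) \sum_(l < d) e T j l * (Dv T l)^*.
  rewrite mulr_sumr; apply: eq_bigr => T _; rewrite mulr_sumr.
  by apply: eq_bigr => k _; rewrite /Dinv (e_sym T k j); field.
rewrite u_part g_part e_part -big_split -sumrB /=; apply: eq_bigr => T _.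
rewrite -big_split -sumrB /=; apply: eq_bigr => i _.
by rewrite !mxE; field.
Qed.

Lemma residual_inner_symgrad (u w : 'cV[C]_d) : n != 0 ->
  \sum_(T < nq) \sum_(i < d) \sum_(j < d) Rmx Dv e u T i j * (symgrad w T i j)^*
  = \sum_(j < d) (w j ord0)^* * (n / 2%:R * ((Mmx Dv *m u) j ord0 - rhs Dv e j ord0)).
Proof.
move=> n_nz.
rewrite (eq_bigr _ (fun T _ => symmetric_contract_symgrad T (Rmx Dv e u T) w (Rmx_sym u T))).
rewrite exchange_big /=; apply: eq_bigr => j _.
by rewrite -mulr_sumr residual_contract_D.
Qed.

Lemma resid_shift (u w : 'cV[C]_d) : n != 0 -> Mmx Dv *m u = rhs Dv e ->
  resid Dv e (u + w) = resid Dv e u + energy w.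
Proof.
move=> n_nz Mu.
set X := fun T i j => Rmx Dv e u T i j * (symgrad w T i j)^*.
have X0 : \sum_(T < nq) \sum_(i < d) \sum_(j < d) X T i j = 0.
  by rewrite residual_inner_symgrad // big1 // => j _; rewrite Mu subrr !mulr0.
have Xc0 : \sum_(T < nq) \sum_(i < d) \sum_(j < d) (X T i j)^* = 0.
  transitivity ((\sum_(T < nq) \sum_(i < d) \sum_(j < d) X T i j)^*); last first.
    by rewrite X0 conjC0.
  rewrite rmorph_sum; apply: eq_bigr => T _.
  by rewrite rmorph_sum; apply: eq_bigr => i _; rewrite rmorph_sum.
have pointwise T i j : `|Rmx Dv e (u + w) T i j| ^+ 2
    = (`|Rmx Dv e u T i j| ^+ 2 + `|symgrad w T i j| ^+ 2) + (X T i j + (X T i j)^*).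
  by rewrite Rmx_add normCD.
rewrite /resid /energy.
under eq_bigr => T _ do under eq_bigr => i _ do
  rewrite (eq_bigr _ (fun j _ => pointwise T i j)) !big_split /=.
under eq_bigr => T _ do rewrite !big_split /=.
by rewrite !big_split /= X0 Xc0 !addr0.
Qed.

End Residual.

Lemma energy_quadratic (w : 'cV[C]_d) : n != 0 ->
  energy w = \sum_(j < d) (w j ord0)^* * (n / 2%:R * (Mmx Dv *m w) j ord0).
Proof.
move=> n_nz; set e0 : 'I_nq -> 'M[C]_d := fun _ => 0.
have e0_sym T i j : e0 T i j = e0 T j i by rewrite !mxE.
have rhs0 j : rhs Dv e0 j ord0 = 0.
  by rewrite mxE big1 // => T _; rewrite big1 // => l _; rewrite !mxE mulr0 mul0r addr0.
transitivity (\sum_(T < nq) \sum_(i < d) \sum_(j < d) Rmx Dv e0 w T i j * (symgrad w T i j)^*).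
  do 3 (apply: eq_bigr => ? _); by rewrite RmxE /e0 [(0 : 'M_d) _ _]mxE subr0 normCK.
rewrite (residual_inner_symgrad e0 e0_sym) //.
by apply: eq_bigr => j _; rewrite rhs0 subr0.
Qed.

(* M = 1 + sum_T g_TT is invertible: its kernel has zero energy. *)
Lemma Mmx_unit : (exists T i, Dv T i != 0) -> Mmx Dv \in unitmx.
Proof.
move=> nzD; rewrite unitmxE unitfE -det_tr; apply/negP => /det0P [v v_nz vM].
have Mv : Mmx Dv *m v^T = 0 by rewrite -[Mmx Dv]trmxK -trmx_mul vM trmx0.
have E0 : energy v^T = 0.
  rewrite energy_quadratic; last exact: Dnorm2_neq0.
  by rewrite big1 // => j _; rewrite Mv !mxE !mulr0.
move/eqP: v_nz; apply; apply: trmx_inj; rewrite trmx0.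
exact: energy_eq0 E0.
Qed.

Section Minimizer.
Variable e : 'I_nq -> 'M[C]_d.
Hypotheses (nzD : exists T i, Dv T i != 0) (e_sym : forall T i j, e T i j = e T j i).

Definition solution : 'cV[C]_d := hmx Dv *m rhs Dv e.

Lemma solutionP : Mmx Dv *m solution = rhs Dv e.
Proof. by rewrite mulmxA mulmxV ?mul1mx //; exact: Mmx_unit. Qed.

Lemma minimizerP (v : 'cV[C]_d) : is_minimizer Dv e v <-> v = solution.
Proof.
have n_nz := Dnorm2_neq0 nzD.
have split_at w : resid Dv e w = resid Dv e solution + energy (w - solution).
  by rewrite -resid_shift ?solutionP // addrC subrK.
split=> [v_min | -> w]; last by rewrite (split_at w) lerDl energy_ge0.
have E_le0 : energy (v - solution) <= 0.
  by have := v_min solution; rewrite (split_at v) gerDl.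
apply/eqP; rewrite -subr_eq0; apply/eqP/energy_eq0 => //.
by apply/eqP; rewrite eq_le E_le0 energy_ge0.
Qed.

Lemma normal_equationsP (v : 'cV[C]_d) : Mmx Dv *m v = rhs Dv e <-> v = solution.
Proof.
split=> [Mv | ->]; last exact: solutionP.
by rewrite /solution -Mv mulKmx //; exact: Mmx_unit.
Qed.

End Minimizer.

Lemma solutionE (e : 'I_nq -> 'M[C]_d) (i : 'I_d) :
  (hmx Dv *m rhs Dv e) i ord0 =
  \sum_(T < nq) \sum_(l < d) \sum_(m < d)
    (Dinv Dv T l * hmx Dv i m + hmx Dv i l * Dinv Dv T m) * e T l m.
Proof.
rewrite mxE; under eq_bigr => m _ do rewrite mxE mulr_sumr.
rewrite exchange_big /=; apply: eq_bigr => T _.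
under [RHS]eq_bigr => l _ do rewrite (eq_bigr _ (fun m _ => mulrDl _ _ _)) big_split /=.
rewrite big_split /= exchange_big /= -big_split /=.
apply: eq_bigr => m _; rewrite mulr_sumr -big_split /=.
by apply: eq_bigr => l _; ring.
Qed.

Lemma symgrad_solutionE (e : 'I_nq -> 'M[C]_d) (u : 'cV[C]_d) :
  (forall i, u i ord0 = \sum_(T < nq) \sum_(l < d) \sum_(m < d)
      (Dinv Dv T l * hmx Dv i m + hmx Dv i l * Dinv Dv T m) * e T l m) ->
  forall T i j, (Dv T i * u j ord0 + u i ord0 * Dv T j) / 2%:R =
    \sum_(L < nq) \sum_(l < d) \sum_(m < d) Gcoef Dv T L i j l m * e L l m.
Proof.
move=> uE T i j; rewrite !uE.
rewrite mulr_sumr mulr_suml -big_split /= mulr_suml; apply: eq_bigr => L _.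
rewrite mulr_sumr mulr_suml -big_split /= mulr_suml; apply: eq_bigr => l _.
rewrite mulr_sumr mulr_suml -big_split /= mulr_suml; apply: eq_bigr => m _.
by rewrite /Gcoef !mxE; ring.
Qed.

Lemma gmx_idempotent (T : 'I_nq) :
  \sum_(k < d) Dinv Dv T k * Dv T k = 1 -> gmx Dv T T *m gmx Dv T T = gmx Dv T T.
Proof.
move=> DinvD; apply/matrixP => i j; rewrite !mxE.
under eq_bigr => k _ do rewrite !mxE.
transitivity (Dv T i * Dinv Dv T j * \sum_(k < d) Dinv Dv T k * Dv T k).
  by rewrite mulr_sumr; apply: eq_bigr => k _; ring.
by rewrite DinvD mulr1.
Qed.

End Compatibility.

(* With a single element, Dinv_1 . D_1 = 1 and h = 1 - g_11/2. *)
Lemma hmx_single_element (C : numClosedFieldType) (d : nat)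
    (Dv : 'I_1 -> 'I_d -> C) :
  (exists T i, Dv T i != 0) -> hmx Dv = 1%:M - 2%:R^-1 *: gmx Dv ord0 ord0.
Proof.
move=> nzD; rewrite /hmx /Mmx big_ord1 invmx_1_plus_idempotent //.
apply: gmx_idempotent.
have n_single : Dnorm2 Dv = \sum_(k < d) Dv ord0 k * (Dv ord0 k)^*.
  by rewrite /Dnorm2 big_ord1.
transitivity (Dnorm2 Dv / Dnorm2 Dv); last by rewrite divff //; exact: Dnorm2_neq0.
by rewrite {1}n_single mulr_suml; apply: eq_bigr => k _; rewrite /Dinv; ring.
Qed.

Theorem mainTheorem6 (C : numClosedFieldType) (d nq : nat)
    (Dv : 'I_nq -> 'I_d -> C) (e : 'I_nq -> 'M[C]_d) :
  (0 < d)%N ->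
  (exists T i, Dv T i != 0) ->
  (forall T i j, e T i j = e T j i) ->
  [/\ Mmx Dv \in unitmx,
      exists! u : 'cV[C]_d, is_minimizer Dv e u,
      forall u : 'cV[C]_d, is_minimizer Dv e u <-> Mmx Dv *m u = rhs Dv e,
      forall u : 'cV[C]_d, is_minimizer Dv e u ->
        (forall i : 'I_d, u i ord0 =
           \sum_(T < nq) \sum_(l < d) \sum_(m < d)
             (Dinv Dv T l * hmx Dv i m + hmx Dv i l * Dinv Dv T m) * e T l m)
        /\ (forall (T : 'I_nq) (i j : 'I_d),
             (Dv T i * u j ord0 + u i ord0 * Dv T j) / 2%:R =
             \sum_(L < nq) \sum_(l < d) \sum_(m < d) Gcoef Dv T L i j l m * e L l m)
    & nq = 1%N -> forall T : 'I_nq,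
        hmx Dv = 1%:M - 2%:R^-1 *: gmx Dv T T].
Proof.
move=> _ nzD e_sym.
have minP := minimizerP Dv e nzD e_sym.
split.
- exact: Mmx_unit.
- exists (solution Dv e); split; first exact/minP.
  by move=> v /minP.
- by move=> v; rewrite minP (normal_equationsP Dv e nzD).
- move=> v /minP ->; have uE := solutionE Dv e.
  by split; [exact: uE | exact: symgrad_solutionE].
- move=> nq1; subst nq => T; rewrite (ord1 T).
  exact: hmx_single_element.
Qed.
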